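(* Let $g\ge2$ be an integer and let $k,d_1,d_2,d_3,\ell,m,n$ be positive integers with $1\le d_1,d_2,d_3\le g-1$, $\ell\le m\le n$ and $n\ge 2$, satisfying $$L_k=d_1\frac{g^\ell-1}{g-1}\cdot d_2\frac{g^m-1}{g-1}\cdot d_3\frac{g^n-1}{g-1}.$$ Then $$k<3n\frac{\log g}{\log\alpha}+1<10n\log g,$$ where $\alpha=(1+\sqrt5)/2$.
   Context: $(L_n)_{n\ge 0}$ is the Lucas sequence: $L_0=2$, $L_1=1$, $L_{n+2}=L_{n+1}+L_n$. $\log$ is the natural logarithm. *)

From Stdlib Require Import Reals Lra Lia.
Open Scope R_scope.

Fixpoint lucas (n : nat) : nat :=
  match n with
  | O => 2%nat
  | S p => match p with
           | O => 1%nat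
           | S q => (lucas p + lucas q)%nat
           end
  end.

Definition alpha : R := (1 + sqrt 5) / 2.

(* Every factor d (g^j - 1)/(g - 1) with d <= g - 1 and j <= n is below g^n, so
   L_k < g^(3n).  Since alpha^(k-1) <= L_k, this gives (k - 1) ln alpha < 3n ln g.
   The second inequality follows from ln alpha > 1/3 (as alpha^3 = 2 alpha + 1 > 4 > e)
   and n ln g >= 2 ln 2 > 1. *)
From Stdlib Require Import Reals Lra Lia Psatz.
Open Scope R_scope.

Lemma alpha_sqr : alpha * alpha = alpha + 1.
Proof.
  unfold alpha. pose proof (sqrt_sqrt 5 ltac:(lra)). nra.
Qed.

Lemma alpha_bounds : 1.6 < alpha < 2.
Proof.
  unfold alpha. pose proof (sqrt_sqrt 5 ltac:(lra)). pose proof (sqrt_pos 5). nra.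
Qed.

Lemma ln_alpha_gt_third : / 3 < ln alpha.
Proof.
  pose proof alpha_bounds as Halpha.
  assert (Hcube : ln 4 < ln (alpha ^ 3)).
  { apply ln_increasing; [lra|]. simpl. pose proof alpha_sqr. nra. }
  rewrite ln_pow in Hcube by lra.
  replace 4 with (2 * 2) in Hcube by ring.
  rewrite ln_mult in Hcube by lra.
  pose proof ln_lt_2. simpl in Hcube. lra.
Qed.

Lemma pow_alpha_le_lucas (k : nat) : alpha ^ k <= INR (lucas (S k)).
Proof.
  enough (H : alpha ^ k <= INR (lucas (S k)) /\
              alpha ^ S k <= INR (lucas (S (S k)))) by apply H.
  induction k as [|k [IH1 IH2]].
  - simpl. pose proof alpha_bounds. lra.
  - split; [exact IH2|].
    change (lucas (S (S (S k)))) with (lucas (S (S k)) + lucas (S k))%nat.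
    rewrite plus_INR.
    replace (alpha ^ S (S k)) with (alpha ^ S k + alpha ^ k); [lra|].
    simpl. rewrite <- Rmult_assoc, alpha_sqr. ring.
Qed.

Lemma lucas_index_lt (k : nat) (c : R) :
  (1 <= k)%nat -> INR (lucas k) < c -> INR k < ln c / ln alpha + 1.
Proof.
  intros Hk Hc.
  pose proof alpha_bounds as Halpha.
  pose proof ln_alpha_gt_third as Hln.
  pose proof (pow_alpha_le_lucas (k - 1)) as Hlow.
  replace (S (k - 1)) with k in Hlow by lia.
  assert (Hpow : ln (alpha ^ (k - 1)) < ln c)
    by (apply ln_increasing; [apply pow_lt|]; lra).
  rewrite ln_pow, minus_INR in Hpow by (lra || lia).
  simpl in Hpow.
  enough (INR k - 1 < ln c / ln alpha) by lra.
  apply Rmult_lt_reg_r with (ln alpha); [lra|].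
  unfold Rdiv. rewrite Rmult_assoc, Rinv_l; lra.
Qed.

Lemma repdigit_bounds (b d : R) (j : nat) :
  1 < b -> 0 <= d <= b - 1 ->
  0 <= d * ((b ^ j - 1) / (b - 1)) <= b ^ j - 1.
Proof.
  intros Hb Hd.
  assert (Hj : 1 <= b ^ j) by (apply pow_R1_Rle; lra).
  assert (Hq : 0 <= (b ^ j - 1) / (b - 1))
    by (apply Rle_mult_inv_pos; lra).
  split; [nra|].
  replace (b ^ j - 1) with ((b - 1) * ((b ^ j - 1) / (b - 1))) at 2
    by (field; lra).
  nra.
Qed.

Lemma repdigit_lt_pow (g d j n : nat) :
  (2 <= g)%nat -> (1 <= d <= g - 1)%nat -> (j <= n)%nat ->
  0 <= INR d * ((INR g ^ j - 1) / (INR g - 1)) < INR g ^ n.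
Proof.
  intros Hg Hd Hj.
  assert (Hb : 2 <= INR g) by (apply (le_INR 2); lia).
  assert (Hdigit : 0 <= INR d <= INR g - 1).
  { replace (INR g - 1) with (INR (g - 1)) by (rewrite minus_INR by lia; reflexivity).
    split; [apply pos_INR | apply le_INR; lia]. }
  pose proof (repdigit_bounds (INR g) (INR d) j ltac:(lra) Hdigit).
  pose proof (Rle_pow (INR g) j n ltac:(lra) Hj).
  lra.
Qed.

Lemma one_lt_mul_ln (g n : nat) :
  (2 <= g)%nat -> (2 <= n)%nat -> 1 < INR n * ln (INR g).
Proof.
  intros Hg Hn.
  assert (Hn2 : 2 <= INR n) by (apply (le_INR 2); lia).
  assert (Hlng : ln 2 <= ln (INR g)).
  { destruct (Nat.eq_dec g 2) as [-> | Hne]; [right; f_equal; simpl; ring|].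
    left. apply ln_increasing; [lra|]. apply (lt_INR 2); lia. }
  pose proof ln_lt_2. nra.
Qed.

Lemma div_ln_alpha_bound (x : R) :
  1 < x -> 3 * x / ln alpha + 1 < 10 * x.
Proof.
  intros Hx.
  pose proof ln_alpha_gt_third as Hln.
  assert (Hinv : / ln alpha < 3).
  { rewrite <- (Rinv_inv 3). apply Rinv_lt_contravar; [|lra].
    apply Rmult_lt_0_compat; lra. }
  unfold Rdiv. nra.
Qed.

Theorem lemma4p1 (g k d1 d2 d3 l m n : nat) :
  (2 <= g)%nat ->
  (1 <= k)%nat -> (1 <= l)%nat ->
  (1 <= d1 <= g - 1)%nat -> (1 <= d2 <= g - 1)%nat -> (1 <= d3 <= g - 1)%nat ->
  (l <= m)%nat -> (m <= n)%nat -> (2 <= n)%nat ->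
  INR (lucas k) =
    (INR d1 * ((INR g ^ l - 1) / (INR g - 1))) *
    (INR d2 * ((INR g ^ m - 1) / (INR g - 1))) *
    (INR d3 * ((INR g ^ n - 1) / (INR g - 1))) ->
  INR k < 3 * INR n * (ln (INR g) / ln alpha) + 1 /\
  3 * INR n * (ln (INR g) / ln alpha) + 1 < 10 * INR n * ln (INR g).
Proof.
  intros Hg Hk _ Hd1 Hd2 Hd3 Hlm Hmn Hn Heq.
  assert (Hlucas : INR (lucas k) < (INR g ^ n) ^ 3).
  { pose proof (repdigit_lt_pow g d1 l n Hg Hd1 ltac:(lia)).
    pose proof (repdigit_lt_pow g d2 m n Hg Hd2 Hmn).
    pose proof (repdigit_lt_pow g d3 n n Hg Hd3 (le_n n)).
    replace ((INR g ^ n) ^ 3) with (INR g ^ n * INR g ^ n * INR g ^ n) by ring.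
    rewrite Heq.
    apply Rmult_le_0_lt_compat; [apply Rmult_le_pos | | apply Rmult_le_0_lt_compat |];
      lra. }
  apply lucas_index_lt in Hlucas; [|exact Hk].
  assert (Hb : 0 < INR g) by (apply lt_0_INR; lia).
  rewrite !ln_pow in Hlucas by (try apply pow_lt; lra).
  split.
  - simpl in Hlucas. unfold Rdiv in *. lra.
  - replace (3 * INR n * (ln (INR g) / ln alpha))
      with (3 * (INR n * ln (INR g)) / ln alpha) by (unfold Rdiv; ring).
    rewrite Rmult_assoc.
    apply div_ln_alpha_bound, one_lt_mul_ln; assumption.
Qed.
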